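(* Let $G$ be a graph such that two or more edges join vertices $v$ and $w$. If $e$ is one of these edges, then $\mathrm{usp}(G\backslash e)\geq \mathrm{usp}(G)$ and $\mathrm{sp}(G\backslash e)\leq \mathrm{sp}(G)$. Moreover, if three or more edges join $v$ and $w$, then $\mathrm{usp}(G\backslash e)=\mathrm{usp}(G)$ and $\mathrm{sp}(G\backslash e)=\mathrm{sp}(G)$.
   Context: All graphs are finite, have at least one vertex, have no loops, and may have multiple (parallel) edges. $G\backslash e$ denotes deletion of edge $e$. A unique shortest path is a shortest $u$–$v$ path $P$ such that every $u$–$v$ path with the same number of vertices is identical to $P$, where two paths with different edge sequences are different even if their vertex sequences agree; a single vertex is a unique shortest path. The parade number $\mathrm{usp}(G)$ is the largest number of vertices of a unique shortest path in $G$. The spectator number is $\mathrm{sp}(G)=|V(G)|-\mathrm{usp}(G)$. *)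

From mathcomp Require Import all_boot.
From mathcomp Require Import boolp.

Set Implicit Arguments.
Unset Strict Implicit.
Unset Printing Implicit Defensive.

(* A multigraph: vertex type V (finite), an ambient finite type Eu of edge
   names with endpoint maps s t : Eu -> V, and the set A : {set Eu} of edges
   actually present.  Edges are undirected: edge f joins s f and t f.
   Deleting edge e from the graph (A,s,t) gives (A :\ e, s, t). *)

Section MGraph.
Variables (V Eu : finType) (s t : Eu -> V).

Definition joins (f : Eu) (x y : V) : bool :=
  ((s f == x) && (t f == y)) || ((s f == y) && (t f == x)).

(* A walk starting at x, given as the sequence of (edge, next vertex) pairs.
   Two walks are equal iff they have the same vertex and edge sequences. *)
Fixpoint is_walk (A : {set Eu}) (x : V) (p : seq (Eu * V)) : bool :=
  match p with
  | [::] => true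
  | (f, y) :: p' => [&& f \in A, joins f x y & is_walk A y p']
  end.

Definition wverts (x : V) (p : seq (Eu * V)) : seq V := x :: map snd p.

Definition nverts (x : V) (p : seq (Eu * V)) : nat := size (wverts x p).

Definition is_path (A : {set Eu}) (u v : V) (x : V) (p : seq (Eu * V)) : Prop :=
  x = u /\ is_walk A x p /\ uniq (wverts x p) /\ last x (map snd p) = v.

Definition is_usp (A : {set Eu}) (u v : V) (p : seq (Eu * V)) : Prop :=
  is_path A u v u p /\
  (forall q, is_path A u v u q -> nverts u p <= nverts u q) /\
  (forall q, is_path A u v u q -> nverts u q = nverts u p -> q = p).

(* the parade number: largest number of vertices of a unique shortest path
   (paths have distinct vertices, so this number is at most #|V|) *)
Definition usp (A : {set Eu}) : nat :=
  \max_(k < #|V|.+1 | `[< exists u v p, is_usp A u v p /\ nverts u p = k >]) k.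

Definition sp (A : {set Eu}) : nat := #|V| - usp A.

End MGraph.

From mathcomp Require Import all_boot.
From mathcomp Require Import boolp.

(* Replacing an edge of a walk by a parallel edge keeps the vertex sequence,
   hence gives a path with the same number of vertices.  So a unique shortest
   path never uses an edge that has a parallel partner; with two parallel
   edges, e is therefore unused by every unique shortest path of G, and
   these stay unique shortest paths in G\e, where there are fewer
   competitors.  With three parallel edges, any path of G through e can be
   rerouted through a partner of e remaining in G\e, so conversely every
   unique shortest path of G\e is one of G. *)

Set Implicit Arguments.
Unset Strict Implicit.
Unset Printing Implicit Defensive.

Section ParallelEdges.
Variables (V Eu : finType) (s t : Eu -> V).

Definition swap_edge (h h' : Eu) (z : Eu * V) : Eu * V :=
  (if z.1 == h then h' else z.1, z.2).

Lemma joins_parallel h h' v w x y :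
  joins s t h v w -> joins s t h' v w -> joins s t h x y -> joins s t h' x y.
Proof.
rewrite /joins.
move=> /orP[/andP[/eqP-> /eqP->]|/andP[/eqP-> /eqP->]]
  /orP[/andP[/eqP-> /eqP->]|/andP[/eqP-> /eqP->]]
  /orP[/andP[/eqP<- /eqP<-]|/andP[/eqP<- /eqP<-]]; by rewrite !eqxx ?orbT.
Qed.

Lemma walk_edges_in (A : {set Eu}) x p :
  is_walk s t A x p -> {subset map fst p <= A}.
Proof.
elim: p x => [|[f y] p IHp] x //= /and3P[fA _ wp] g.
by rewrite inE => /orP[/eqP->|/(IHp _ wp)].
Qed.

Lemma is_walk_subset (A B : {set Eu}) x p :
  is_walk s t A x p -> {subset map fst p <= B} -> is_walk s t B x p.
Proof.
elim: p x => [|[f y] p IHp] x //= /and3P[_ jf wp] pB.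
rewrite pB ?mem_head //= jf /=; apply: IHp => // g gp.
by apply: pB; rewrite inE gp orbT.
Qed.

Lemma is_path_subset (A B : {set Eu}) u x p :
  A \subset B -> is_path s t A u x u p -> is_path s t B u x u p.
Proof.
move=> /subsetP AB [xu [wp pu]]; split=> //; split=> //.
by apply: (is_walk_subset wp) => g /(walk_edges_in wp) /AB.
Qed.

Section Swap.
Variables (h h' : Eu).

Lemma map_snd_swap p : map snd (map (swap_edge h h') p) = map snd p.
Proof. by rewrite -map_comp. Qed.

Lemma swap_edge_id p : h \notin map fst p -> map (swap_edge h h') p = p.
Proof.
move=> hp; rewrite -[RHS]map_id; apply/eq_in_map => -[f y] fyp.
rewrite /swap_edge /=; case: eqP => // fh.
by move: hp; rewrite -fh (map_f fst fyp).
Qed.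

Lemma swap_edge_in p : h \in map fst p -> h' \in map fst (map (swap_edge h h') p).
Proof.
case/mapP=> z zp hz; rewrite -map_comp; apply/mapP; exists z => //=.
by rewrite /swap_edge -hz eqxx.
Qed.

Lemma swap_edge_notin p : h' != h -> h \notin map fst (map (swap_edge h h') p).
Proof.
move=> h'h; apply/negP => /mapP[_ /mapP[[g z] _ ->]]; rewrite /swap_edge /=.
by case: eqP => [_ hh'|gh /esym //]; rewrite hh' eqxx in h'h.
Qed.

Variables (v w : V).
Hypotheses (hvw : joins s t h v w) (h'vw : joins s t h' v w).

Lemma is_walk_swap (A B : {set Eu}) x p :
  h' \in B -> A :\ h \subset B ->
  is_walk s t A x p -> is_walk s t B x (map (swap_edge h h') p).
Proof.
move=> h'B /subsetP AB.
elim: p x => [|[f y] p IHp] x //= /and3P[fA jf wp].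
rewrite /swap_edge /= IHp // andbT.
case: eqP => [fh|/eqP fh]; last by rewrite AB ?inE ?fh.
by rewrite h'B; apply: joins_parallel hvw h'vw _; rewrite -fh.
Qed.

Lemma is_path_swap (A B : {set Eu}) u x p :
  h' \in B -> A :\ h \subset B ->
  is_path s t A u x u p ->
  is_path s t B u x u (map (swap_edge h h') p) /\
  nverts u (map (swap_edge h h') p) = nverts u p.
Proof.
move=> h'B AB [_ [wp [up lp]]].
rewrite /is_path /nverts /wverts !map_snd_swap; do !split=> //.
exact: is_walk_swap wp.
Qed.

Lemma usp_avoids_parallel (B : {set Eu}) u x p :
  h' \in B -> h' != h -> is_usp s t B u x p -> h \notin map fst p.
Proof.
move=> h'B h'h [pp [_ uniq_p]]; apply/negP => hp.
have [qp nq] := is_path_swap h'B (subD1set B h) pp.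
by move: (swap_edge_notin p h'h); rewrite (uniq_p _ qp nq) hp.
Qed.

End Swap.

Lemma exists_parallel_edge (B : {set Eu}) v w h :
  2 <= #|[set f in B | joins s t f v w]| ->
  exists h', [/\ h' \in B, joins s t h' v w & h' != h].
Proof.
move=> two.
have : 0 < #|[set f in B | joins s t f v w] :\ h|.
  by move: two; rewrite (cardsD1 h); case: (h \in _) => [|/ltnW].
by case/card_gt0P => h'; rewrite !inE => /and3P[h'h h'B jh']; exists h'.
Qed.

Lemma leq_usp (A B : {set Eu}) :
  (forall u x p, is_usp s t A u x p -> is_usp s t B u x p) ->
  usp s t A <= usp s t B.
Proof.
move=> AB; apply/bigmax_leqP => k /asboolP[u [x [p [up nk]]]].
by apply: leq_bigmax_cond; apply/asboolP; exists u, x, p; split; first exact: AB.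
Qed.

Section DeleteParallel.
Variables (A : {set Eu}) (e f : Eu) (v w : V).
Hypotheses (evw : joins s t e v w) (fvw : joins s t f v w).

Lemma is_usp_setD1 u x p :
  f \in A -> f != e -> is_usp s t A u x p -> is_usp s t (A :\ e) u x p.
Proof.
move=> fA fe up; have ep := usp_avoids_parallel evw fvw fA fe up.
have sub := is_path_subset (subD1set A e).
case: up => [[_ [wp pu]] [short uniq_p]]; split; last first.
  by split=> q /sub; [apply: short | apply: uniq_p].
split=> //; split=> //; apply: (is_walk_subset wp) => g gp.
by rewrite !inE (walk_edges_in wp gp) andbT; apply: contraNneq ep => <-.
Qed.

Lemma is_usp_of_setD1 (g : Eu) u x p :
  f \in A :\ e -> g \in A :\ e -> joins s t g v w -> g != f ->
  is_usp s t (A :\ e) u x p -> is_usp s t A u x p.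
Proof.
move=> fAe gAe gvw gf up.
have fp := usp_avoids_parallel fvw gvw gAe gf up.
case: up => [pp [short uniq_p]]; split; first exact: is_path_subset (subD1set A e) pp.
split=> q qp; have [qp' nq'] := is_path_swap evw fvw fAe (subxx _) qp.
  by rewrite -nq'; apply: short.
move=> nq; have qp'_eq := uniq_p _ qp' (etrans nq' nq).
suff eNq : e \notin map fst q by rewrite -qp'_eq swap_edge_id.
by apply: contra fp => /(swap_edge_in f); rewrite qp'_eq.
Qed.

End DeleteParallel.

End ParallelEdges.

Theorem lemma6p8 (V Eu : finType) (s t : Eu -> V) (A : {set Eu})
    (noloop : forall f, f \in A -> s f != t f)
    (v w : V) (e : Eu) (eA : e \in A) (evw : joins s t e v w)
    (two : 2 <= #|[set f in A | joins s t f v w]|) :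
  (usp s t A <= usp s t (A :\ e) /\ sp s t (A :\ e) <= sp s t A) /\
  (3 <= #|[set f in A | joins s t f v w]| ->
     usp s t (A :\ e) = usp s t A /\ sp s t (A :\ e) = sp s t A).
Proof.
have [f [fA fvw fe]] := exists_parallel_edge e two.
have le : usp s t A <= usp s t (A :\ e).
  by apply: leq_usp => u x p; apply: (is_usp_setD1 evw fvw fA fe).
split; first by rewrite /sp leq_sub2l.
move=> three; have two' : 2 <= #|[set g in A :\ e | joins s t g v w]|.
  have -> : [set g in A :\ e | joins s t g v w] =
            [set g in A | joins s t g v w] :\ e.
    by apply/setP => g; rewrite !inE andbA.
  by move: three; rewrite (cardsD1 e) !inE eA evw.
have [f' [f'Ae f'vw _]] := exists_parallel_edge e two'.
have [g [gAe gvw gf']] := exists_parallel_edge f' two'.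
have ge : usp s t (A :\ e) <= usp s t A.
  by apply: leq_usp => u x p; apply: (is_usp_of_setD1 evw f'vw f'Ae gAe gvw gf').
have usp_eq : usp s t (A :\ e) = usp s t A by apply/eqP; rewrite eqn_leq le ge.
by rewrite /sp usp_eq.
Qed.
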